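(* For each positive integer $\ell$ let $k_\ell>0$, and suppose $\lim_{\ell\to\infty}\ell e^{-\delta k_\ell}=0$ for every $\delta>0$. Let $A>0$, $B>0$, $\bar w\ge1$ be constants. Let $\{a_\ell\}$, $\{b_\ell\}$ be sequences with $b_\ell\le a_\ell$, $\lim_{\ell\to\infty}k_\ell/a_\ell=a\in[0,\infty)$ and $\lim_{\ell\to\infty}k_\ell/b_\ell=b\in(0,\infty)$, and let $\{A_\ell\}$ satisfy $\liminf_{\ell\to\infty}A_\ell=A$. Define on $[0,a_\ell]$ $$h_\ell(w)=A_\ell\log(1+Bw)-\frac{a_\ell}{k_\ell}H_2\Big(\frac w{a_\ell}\Big).$$ Let $w_\ell^*$ be a point achieving the global minimum of $h_\ell$ restricted to $[\bar w,b_\ell]$. Then for all sufficiently large $\ell$, either $w_\ell^*=\bar w$ or $w_\ell^*\in[cb_\ell,b_\ell]$, where $c=\min\Big\{\frac{bA}{64(1+Aa)},1\Big\}$.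
   Context: Logarithms are natural; $H_2(p)=-p\log p-(1-p)\log(1-p)$ for $p\in[0,1]$. *)

From Stdlib Require Import Reals.
Open Scope R_scope.

(* Binary entropy with natural log. Stdlib's [ln] satisfies [ln 0 = 0],
   so [0 * ln 0 = 0], matching the convention 0 log 0 = 0. *)
Definition H2 (p : R) : R := - (p * ln p) - (1 - p) * ln (1 - p).

Definition h_fun (Al B al kl w : R) : R :=
  Al * ln (1 + B * w) - (al / kl) * H2 (w / al).

Definition liminf_eq (u : nat -> R) (L : R) : Prop :=
  forall eps, 0 < eps ->
    (exists N, forall n, (N <= n)%nat -> L - eps < u n) /\
    (forall N, exists n, (N <= n)%nat /\ u n < L + eps).

(* For large l, h_l is strictly concave on [wbar, c b_l]: its second derivative
   -A_l B^2/(1+Bw)^2 + (1/(a_l - w) + 1/w)/k_l is negative once w <= a_l/2,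
   16 w <= A k_l and A B^2 k_l >= 16.  The last bound holds eventually because
   l e^{-k_l} -> 0 forces k_l -> oo, and the ratio limits k_l/b_l -> b,
   k_l/a_l -> a make c b_l small enough for the first two.  By the mean value
   theorem applied twice, a strictly concave function takes a value below its
   interior values at one of the endpoints, so a minimizer of h_l on
   [wbar, b_l] cannot lie strictly between wbar and c b_l. *)

From Stdlib Require Import Reals Lra Lia.
From Coquelicot Require Import Coquelicot.
Open Scope R_scope.

Lemma strict_concave_endpoint_min_lt (f f' f'' : R -> R) (x y z : R) :
  x < y < z ->
  (forall t, x <= t <= z -> derivable_pt_lim f t (f' t)) ->
  (forall t, x <= t <= z -> derivable_pt_lim f' t (f'' t)) ->
  (forall t, x <= t <= z -> f'' t < 0) ->
  Rmin (f x) (f z) < f y.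
Proof.
  intros [Hxy Hyz] Hf Hf' Hneg.
  apply Rnot_le_lt; intros Hle.
  assert (Hyx : f y <= f x) by (eapply Rle_trans; [exact Hle | apply Rmin_l]).
  assert (Hyz' : f y <= f z) by (eapply Rle_trans; [exact Hle | apply Rmin_r]).
  destruct (MVT_cor2 f f' x y Hxy) as [c1 [E1 Hc1]].
  { intros t Ht; apply Hf; lra. }
  destruct (MVT_cor2 f f' y z Hyz) as [c2 [E2 Hc2]].
  { intros t Ht; apply Hf; lra. }
  assert (Hf'c1 : f' c1 <= 0) by nra.
  assert (Hf'c2 : 0 <= f' c2) by nra.
  assert (Hc12 : c1 < c2) by lra.
  destruct (MVT_cor2 f' f'' c1 c2 Hc12) as [c3 [E3 Hc3]].
  { intros t Ht; apply Hf'; lra. }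
  assert (f'' c3 < 0) by (apply Hneg; lra).
  nra.
Qed.

Lemma cv_INR_mul_exp_eventually_gt (k : nat -> R) (delta M : R) :
  0 < delta -> Un_cv (fun l => INR l * exp (- delta * k l)) 0 ->
  eventually (fun l => M < k l).
Proof.
  intros Hdelta Hcv.
  destruct (Hcv (exp (- delta * M)) (exp_pos _)) as [N HN].
  exists (S N); intros l Hl.
  specialize (HN l ltac:(lia)).
  unfold R_dist in HN; rewrite Rminus_0_r in HN.
  assert (Hl1 : 1 <= INR l) by (apply (le_INR 1); lia).
  pose proof (exp_pos (- delta * k l)) as Hpos.
  rewrite Rabs_right in HN by nra.
  assert (Hexp : exp (- delta * k l) < exp (- delta * M)) by nra.
  apply exp_lt_inv in Hexp.
  nra.
Qed.

Lemma pos_denom_of_R_dist_div (x y r e : R) :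
  0 < x -> e <= r -> R_dist (x / y) r < e -> 0 < y.
Proof.
  intros Hx Her Hd.
  unfold R_dist in Hd; apply Rabs_def2 in Hd.
  destruct (Rtotal_order y 0) as [Hy | [Hy | Hy]]; [| | exact Hy].
  - assert (x / y < 0) by (apply Rdiv_pos_neg; lra). lra.
  - subst y; unfold Rdiv in Hd; rewrite Rinv_0, Rmult_0_r in Hd. lra.
Qed.

Lemma ratio_bounds (x y r e : R) :
  0 < y -> R_dist (x / y) r < e -> (r - e) * y < x < (r + e) * y.
Proof.
  intros Hy Hd.
  unfold R_dist in Hd; apply Rabs_def2 in Hd.
  replace x with (x / y * y) by (field; lra).
  split; apply Rmult_lt_compat_r; lra.
Qed.

Definition h_fun' (Al B al K w : R) : R :=
  Al * B / (1 + B * w) - (1 / K) * (ln (1 - w / al) - ln (w / al)).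

Definition h_fun'' (Al B al K w : R) : R :=
  - (Al * B ^ 2 / (1 + B * w) ^ 2) + (1 / K) * (1 / (al - w) + 1 / w).

Lemma div_in_open_unit (w al : R) : 0 < w < al -> 0 < w / al /\ 0 < 1 - w / al.
Proof.
  intros [Hw Hwa]; split.
  - apply Rdiv_lt_0_compat; lra.
  - assert (w / al < 1) by (apply (Rdiv_lt_1 w al); lra).
    lra.
Qed.

Lemma derivable_pt_lim_h_fun (Al B al K w : R) :
  0 < K -> 0 < B -> 0 < w < al ->
  derivable_pt_lim (h_fun Al B al K) w (h_fun' Al B al K w).
Proof.
  intros HK HB Hw; pose proof (div_in_open_unit w al Hw).
  apply is_derive_Reals; unfold h_fun, H2, h_fun'.
  auto_derive.
  - repeat split; nra.
  - unfold Rminus, Rdiv; field; repeat split; nra.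
Qed.

Lemma derivable_pt_lim_h_fun' (Al B al K w : R) :
  0 < K -> 0 < B -> 0 < w < al ->
  derivable_pt_lim (h_fun' Al B al K) w (h_fun'' Al B al K w).
Proof.
  intros HK HB Hw; pose proof (div_in_open_unit w al Hw).
  apply is_derive_Reals; unfold h_fun', h_fun''.
  auto_derive.
  - repeat split; nra.
  - unfold Rminus, Rdiv; field; repeat split; nra.
Qed.

Lemma h_fun''_neg (Al B al K w : R) :
  0 < B -> 0 < K -> 0 < w -> 2 * w <= al ->
  2 * (1 + B * w) ^ 2 < Al * B ^ 2 * K * w -> h_fun'' Al B al K w < 0.
Proof.
  intros HB HK Hw Hwal Hdom.
  assert (Hbw : 0 < 1 + B * w) by nra.
  assert (Hq : 0 < (1 + B * w) ^ 2) by (apply pow_lt; lra).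
  assert (Hinv : 1 / (al - w) <= 1 / w)
    by (unfold Rdiv; rewrite !Rmult_1_l; apply Rinv_le_contravar; lra).
  unfold h_fun''.
  apply Rle_lt_trans with (- (Al * B ^ 2 / (1 + B * w) ^ 2) + 2 / (K * w)).
  - apply Rplus_le_compat_l.
    replace (2 / (K * w)) with (1 / K * (1 / w + 1 / w)) by (field; lra).
    apply Rmult_le_compat_l; [ | lra].
    left; apply Rdiv_lt_0_compat; lra.
  - apply Rmult_lt_reg_r with (K * w * (1 + B * w) ^ 2).
    + apply Rmult_lt_0_compat; [apply Rmult_lt_0_compat |]; lra.
    + replace ((- (Al * B ^ 2 / (1 + B * w) ^ 2) + 2 / (K * w)) * (K * w * (1 + B * w) ^ 2))
        with (2 * (1 + B * w) ^ 2 - Al * B ^ 2 * K * w) by (field; repeat split; lra).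
      lra.
Qed.

Lemma two_sq_one_add_lt (A Al B K w : R) :
  0 < B -> 0 < K -> A / 2 < Al -> 1 <= w -> 16 * w <= A * K ->
  16 <= A * B ^ 2 * K -> 2 * (1 + B * w) ^ 2 < Al * B ^ 2 * K * w.
Proof.
  intros HB HK HAl Hw HwK HBK.
  assert (HB2 : 0 < B ^ 2) by (apply pow_lt; lra).
  assert (Hmono : A / 2 * B ^ 2 * K * w < Al * B ^ 2 * K * w).
  { repeat apply Rmult_lt_compat_r; try lra; nra. }
  destruct (Rle_or_lt 1 (B * w)) as [Hbw | Hbw].
  - assert ((1 + B * w) ^ 2 <= 4 * (B * w) ^ 2) by nra.
    assert (8 * (B * w) ^ 2 <= A / 2 * B ^ 2 * K * w)
      by (assert (0 <= B ^ 2 * w * (A * K - 16 * w)) by (apply Rmult_le_pos; nra); lra).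
    lra.
  - assert ((1 + B * w) ^ 2 < 4)
      by (assert (0 < (1 - B * w) * (3 + B * w)) by (apply Rmult_lt_0_compat; nra); nra).
    assert (8 * w <= A / 2 * B ^ 2 * K * w) by nra.
    lra.
Qed.

Lemma h_fun_minimizer_dichotomy (A B a b Al al bl K wbar ws : R) :
  0 < A -> 0 < B -> 0 <= a -> 0 < b -> 1 <= wbar ->
  A / 2 < Al -> 16 <= A * B ^ 2 * K ->
  b * bl < 2 * K -> A * K < (1 + A * a) * al -> bl <= al ->
  wbar <= ws <= bl ->
  (forall v, wbar <= v <= bl -> h_fun Al B al K ws <= h_fun Al B al K v) ->
  ws = wbar \/ Rmin (b * A / (64 * (1 + A * a))) 1 * bl <= ws.
Proof.
  intros HA HB Ha Hb Hwb HAl HBK HbK HKal Hbal Hws Hmin.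
  set (c0 := b * A / (64 * (1 + A * a))).
  set (z := Rmin c0 1 * bl).
  destruct (Rle_or_lt z ws) as [Hz | Hz]; [right; exact Hz | left].
  destruct (Req_dec ws wbar) as [E | E]; [exact E | exfalso].
  assert (HK : 0 < K) by (assert (0 < B ^ 2) by (apply pow_lt; lra); nra).
  assert (Hc0 : 0 < c0) by (apply Rdiv_lt_0_compat; nra).
  assert (Hzc0 : z <= c0 * bl) by (apply Rmult_le_compat_r; [lra | apply Rmin_l]).
  assert (Hzbl : z <= 1 * bl) by (apply Rmult_le_compat_r; [lra | apply Rmin_r]).
  assert (Hc0bl : 64 * (1 + A * a) * (c0 * bl) = A * (b * bl)) by (unfold c0; field; nra).
  assert (Hz32 : 32 * (1 + A * a) * z < A * K).
  { assert (32 * (1 + A * a) * z <= 32 * (1 + A * a) * (c0 * bl))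
      by (apply Rmult_le_compat_l; [nra | exact Hzc0]).
    assert (A * (b * bl) < A * (2 * K)) by (apply Rmult_lt_compat_l; lra).
    lra. }
  assert (HzK : 32 * z < A * K)
    by (assert (0 <= A * a * z) by (apply Rmult_le_pos; nra); lra).
  assert (Hzal : 32 * z < al)
    by (apply Rmult_lt_reg_l with (1 + A * a); nra).
  assert (Hneg : forall t, wbar <= t <= z -> h_fun'' Al B al K t < 0).
  { intros t Ht.
    apply h_fun''_neg; try lra.
    apply (two_sq_one_add_lt A); lra. }
  apply (Rlt_not_le _ _ (strict_concave_endpoint_min_lt (h_fun Al B al K)
           (h_fun' Al B al K) (h_fun'' Al B al K) wbar ws z
           ltac:(lra) ltac:(intros t Ht; apply derivable_pt_lim_h_fun; nra)
           ltac:(intros t Ht; apply derivable_pt_lim_h_fun'; nra) Hneg)).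
  apply Rmin_glb; apply Hmin; lra.
Qed.

Theorem lemma7
  (k : nat -> R) (A B wbar : R) (av bv AA : nat -> R) (a b : R) (w : nat -> R) :
  (forall l, (1 <= l)%nat -> 0 < k l) ->
  (forall delta, 0 < delta -> Un_cv (fun l => INR l * exp (- delta * k l)) 0) ->
  0 < A -> 0 < B -> 1 <= wbar ->
  (forall l, (1 <= l)%nat -> bv l <= av l) ->
  0 <= a -> Un_cv (fun l => k l / av l) a ->
  0 < b -> Un_cv (fun l => k l / bv l) b ->
  liminf_eq AA A ->
  (* w l is a global minimizer of h_l on [wbar, b_l] (whenever that interval is nonempty) *)
  (forall l, (1 <= l)%nat -> wbar <= bv l ->
     wbar <= w l <= bv l /\
     forall v, wbar <= v <= bv l ->
       h_fun (AA l) B (av l) (k l) (w l) <= h_fun (AA l) B (av l) (k l) v) ->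
  exists N, forall l, (N <= l)%nat ->
    w l = wbar \/
    Rmin (b * A / (64 * (1 + A * a))) 1 * bv l <= w l <= bv l.
Proof.
  intros Hk Hexp HA HB Hwb Hba Ha Hcva Hb Hcvb Hlim Hmin.
  assert (Hone : eventually (fun l => (1 <= l)%nat)) by (exists 1%nat; easy).
  pose proof (cv_INR_mul_exp_eventually_gt k 1 (2 * b * wbar) Rlt_0_1 (Hexp 1 Rlt_0_1)) as HKw.
  pose proof (cv_INR_mul_exp_eventually_gt k 1 (16 / (A * B ^ 2)) Rlt_0_1 (Hexp 1 Rlt_0_1)) as HKB.
  assert (HAl : eventually (fun l => A - A / 2 < AA l)) by exact (proj1 (Hlim (A / 2) ltac:(lra))).
  assert (Hbl : eventually (fun l => R_dist (k l / bv l) b < b / 2)) by exact (Hcvb (b / 2) ltac:(lra)).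
  assert (Hal : eventually (fun l => R_dist (k l / av l) a < / A))
    by exact (Hcva (/ A) ltac:(apply Rinv_0_lt_compat; lra)).
  destruct (filter_and _ _ Hone (filter_and _ _ HKw (filter_and _ _ HKB
              (filter_and _ _ HAl (filter_and _ _ Hbl Hal))))) as [N HN].
  exists N; intros l HlN.
  destruct (HN l HlN) as (Hl & HKw_l & HKB_l & HAl_l & Hbl_l & Hal_l).
  assert (HK : 0 < k l) by exact (Hk l Hl).
  assert (Hbl_pos : 0 < bv l) by exact (pos_denom_of_R_dist_div _ _ b (b / 2) HK ltac:(lra) Hbl_l).
  pose proof (ratio_bounds _ _ _ _ Hbl_pos Hbl_l) as Hbl_bounds.
  pose proof (ratio_bounds _ _ _ _ (Rlt_le_trans _ _ _ Hbl_pos (Hba l Hl)) Hal_l) as Hal_bounds.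
  assert (Hwbl : wbar <= bv l) by nra.
  destruct (Hmin l Hl Hwbl) as [Hws Hmin_l].
  assert (HBK : 16 <= A * B ^ 2 * k l).
  { apply Rlt_div_l in HKB_l; [lra |].
    assert (0 < B ^ 2) by (apply pow_lt; lra); nra. }
  assert (HKal : A * k l < (1 + A * a) * av l).
  { replace ((1 + A * a) * av l) with (A * ((a + / A) * av l)) by (field; lra).
    apply Rmult_lt_compat_l; lra. }
  destruct (h_fun_minimizer_dichotomy A B a b (AA l) (av l) (bv l) (k l) wbar (w l)
              HA HB Ha Hb Hwb ltac:(lra) HBK ltac:(lra) HKal (Hba l Hl) Hws Hmin_l)
    as [E | E]; [left | right]; lra.
Qed.
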